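(* Let $F\in\mathbb{R}^{p\times n}$ be arbitrary, let $s\ge1$ and $k$ be integers, and let $(u,x,y)$ be a solution of the system over the time interval $[k+1,k+s]$ (with arbitrary state $x(k+1)$). Then there exists $v\in\mathbb{R}^{(s+n)p}$ such that $$\begin{bmatrix}u_s(k)\\ y_s(k)\end{bmatrix}=I_{G,s}(F)\,v .$$ Moreover, if $s\ge n$, then $\operatorname{rank} I_{G,s}(F)=sp+n$.
   Context: Consider the discrete-time LTI system $x(k+1)=Ax(k)+Bu(k)$, $y(k)=Cx(k)+Du(k)$ with $u\in\mathbb{R}^p$, $x\in\mathbb{R}^n$, $y\in\mathbb{R}^m$, $n\ge 1$, and $(A,B,C,D)$ a minimal (controllable and observable) realization. For a sequence $\phi$ and integers $k$, $s\ge1$, the stacked vector is $\phi_s(k)=[\phi(k+1)^T,\dots,\phi(k+s)^T]^T$. For $F\in\mathbb{R}^{p\times n}$ put $A_F=A+BF$ and $C_F=C+DF$. For an integer $s\ge1$ and a gain $F$, the finite-sample image representation consists of the matrices $M_s(F)\in\mathbb{R}^{sp\times(s+n)p}$ and $N_s(F)\in\mathbb{R}^{sm\times(s+n)p}$ whose $(l,j)$ blocks ($l=1,\dots,s$; $j=1,\dots,s+n$) are $M_{n+l-j}$ and $N_{n+l-j}$, respectively, where $M_k=FA_F^{k-1}B$ for $k\ge1$, $M_0=I_p$, $M_k=0$ for $k<0$, and $N_k=C_FA_F^{k-1}B$ for $k\ge1$, $N_0=D$, $N_k=0$ for $k<0$. Write $I_{G,s}(F)=\begin{bmatrix}M_s(F)\\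 N_s(F)\end{bmatrix}$. *)

From HB Require Import structures.
From mathcomp Require Import all_boot all_order all_algebra.
From mathcomp Require Import reals.
Set Implicit Arguments. Unset Strict Implicit. Unset Printing Implicit Defensive.
Import Order.TTheory GRing.Theory Num.Theory.
Local Open Scope ring_scope.

Section Defs.
Variable R : realType.

Definition controllable n p (A : 'M[R]_n) (B : 'M[R]_(n, p)) : Prop :=
  \rank (\mxrow_(j < n) (A ^+ j *m B)) = n.

Definition observable n m (A : 'M[R]_n) (C : 'M[R]_(m, n)) : Prop :=
  \rank (\mxcol_(i < n) (C *m A ^+ i)) = n.

Definition AF n p (A : 'M[R]_n) (B : 'M[R]_(n, p)) (F : 'M[R]_(p, n)) : 'M[R]_n :=
  A + B *m F.
Definition CF n p m (C : 'M[R]_(m, n)) (D : 'M[R]_(m, p)) (F : 'M[R]_(p, n))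
  : 'M[R]_(m, n) := C + D *m F.

Definition Mk n p (A : 'M[R]_n) (B : 'M[R]_(n, p)) (F : 'M[R]_(p, n)) (k : int)
  : 'M[R]_p :=
  match k with
  | Posz 0 => 1%:M
  | Posz t.+1 => F *m (AF A B F) ^+ t *m B
  | Negz _ => 0
  end.

Definition Nk n p m (A : 'M[R]_n) (B : 'M[R]_(n, p)) (C : 'M[R]_(m, n))
  (D : 'M[R]_(m, p)) (F : 'M[R]_(p, n)) (k : int) : 'M[R]_(m, p) :=
  match k with
  | Posz 0 => D
  | Posz t.+1 => CF C D F *m (AF A B F) ^+ t *m B
  | Negz _ => 0
  end.

(* M_s(F): block (l, j) (0-based here) is M_{n + l - j}, which equals
   M_{n + l' - j'} for the 1-based indices l' = l+1, j' = j+1 *)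
Definition Ms n p (A : 'M[R]_n) (B : 'M[R]_(n, p)) (F : 'M[R]_(p, n)) (s : nat)
  : 'M[R]_(\sum_(l < s) p, \sum_(j < s + n) p) :=
  \mxblock_(l < s, j < s + n) Mk A B F (n%:Z + l%:Z - j%:Z).

Definition Ns n p m (A : 'M[R]_n) (B : 'M[R]_(n, p)) (C : 'M[R]_(m, n))
  (D : 'M[R]_(m, p)) (F : 'M[R]_(p, n)) (s : nat)
  : 'M[R]_(\sum_(l < s) m, \sum_(j < s + n) p) :=
  \mxblock_(l < s, j < s + n) Nk A B C D F (n%:Z + l%:Z - j%:Z).

Definition IG n p m (A : 'M[R]_n) (B : 'M[R]_(n, p)) (C : 'M[R]_(m, n))
  (D : 'M[R]_(m, p)) (F : 'M[R]_(p, n)) (s : nat) :=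
  col_mx (Ms A B F s) (Ns A B C D F s).

Definition stack q (phi : int -> 'cV[R]_q) (k : int) (s : nat)
  : 'cV[R]_(\sum_(l < s) q) :=
  \mxcol_(l < s) phi (k + (l.+1)%:Z).

Definition solves_on n p m (A : 'M[R]_n) (B : 'M[R]_(n, p)) (C : 'M[R]_(m, n))
  (D : 'M[R]_(m, p)) (u : int -> 'cV[R]_p) (x : int -> 'cV[R]_n)
  (y : int -> 'cV[R]_m) (k : int) (s : nat) : Prop :=
  (forall t : int, k + 1 <= t -> t + 1 <= k + s%:Z ->
     x (t + 1) = A *m x t + B *m u t) /\
  (forall t : int, k + 1 <= t -> t <= k + s%:Z ->
     y t = C *m x t + D *m u t).

End Defs.

(* Substituting u = F x + w turns the system into the closed loop
   x(t+1) = A_F x(t) + B w(t), u = F x + w, y = C_F x + D w, and the columns of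
   I_{G,s}(F) are exactly the stacked (u, y) of closed-loop trajectories of length
   n + s started at 0, observed on their last s steps.  These span the same space
   as the columns of the open-loop matrix [0 I; O_s T_s] (O_s the s-step
   observability matrix, T_s the Toeplitz matrix of the Markov parameters D, CA^kB)
   that sends an initial state and s inputs to the stacked inputs and outputs:
   a closed-loop trajectory is an open-loop one, and conversely, by
   controllability, every initial state is reached from 0 in n steps, so every
   open-loop trajectory is the tail of one started at 0.  For s >= n the
   open-loop matrix is injective by observability, hence of rank n + sp. *)

From HB Require Import structures.
From mathcomp Require Import all_boot all_order all_algebra.
From mathcomp Require Import reals.
From mathcomp Require Import zify.
Set Implicit Arguments. Unset Strict Implicit. Unset Printing Implicit Defensive.
Import Order.TTheory GRing.Theory Num.Theory.
Local Open Scope ring_scope.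

Section StateTrajectory.
Variables (R : pzRingType) (n p : nat) (A : 'M[R]_n) (B : 'M[R]_(n, p)).

Fixpoint state_traj (x0 : 'cV[R]_n) (U : nat -> 'cV[R]_p) (i : nat) : 'cV[R]_n :=
  if i is i'.+1 then A *m state_traj x0 U i' + B *m U i' else x0.

Lemma eq_state_traj x0 U U' l :
  (forall i, (i < l)%N -> U i = U' i) -> state_traj x0 U l = state_traj x0 U' l.
Proof.
elim: l => [|l IH] eqU //=.
by rewrite IH => [|i ltil]; rewrite ?eqU // ltnW.
Qed.

Lemma state_traj_cat x0 U a l :
  state_traj x0 U (a + l) = state_traj (state_traj x0 U a) (fun i => U (a + i)%N) l.
Proof. by elim: l => [|l /= <-]; rewrite ?addn0 ?addnS. Qed.

Lemma state_trajD x0 U i : state_traj x0 U i = A ^+ i *m x0 + state_traj 0 U i.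
Proof.
elim: i => [|i /= ->]; first by rewrite mul1mx addr0.
by rewrite mulmxDr mulmxA exprS addrA.
Qed.

Lemma state_traj0E U i :
  state_traj 0 U i = \sum_(j < i) A ^+ (i.-1 - j) *m B *m U j.
Proof.
elim: i => [|i /= ->]; first by rewrite big_ord0.
rewrite big_ord_recr /= subnn mul1mx mulmx_sumr; congr (_ + _).
apply: eq_bigr => j _.
have -> : (i.+1.-1 - j = (i.-1 - j).+1)%N by have := ltn_ord j; lia.
by rewrite exprS !mulmxA.
Qed.

End StateTrajectory.

Lemma mxcol_seqP (R : nmodType) N q c (M : 'M[R]_(\sum_(j < N) q, c)) :
  exists W : nat -> 'M[R]_(q, c), M = \mxcol_(j < N) W j.
Proof.
exists (fun j => if insub j is Some o then submxcol M o else 0).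
by rewrite -{1}[M]submxcolK; apply: eq_mxcol => j; rewrite valK.
Qed.

Lemma col_mx_mxcol_seqP (R : nmodType) a N q c (M : 'M[R]_(a + \sum_(j < N) q, c)) :
  exists x0 (W : nat -> 'M[R]_(q, c)), M = col_mx x0 (\mxcol_(j < N) W j).
Proof.
have [W defW] := mxcol_seqP (dsubmx M).
by exists (usubmx M), W; rewrite -defW vsubmxK.
Qed.

Section MarkovParameters.
Variable R : pzRingType.

Definition markov_seq a b (H0 : 'M[R]_(a, b)) (H : nat -> 'M[R]_(a, b)) (k : int)
  : 'M[R]_(a, b) :=
  match k with
  | Posz 0 => H0
  | Posz t.+1 => H t
  | Negz _ => 0
  end.

Lemma sum_markov_seq a b (H0 : 'M[R]_(a, b)) H (W : nat -> 'cV[R]_b) N i :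
  (i < N)%N ->
  \sum_(j < N) markov_seq H0 H (i%:Z - j%:Z) *m W j =
  \sum_(j < i) H (i.-1 - j)%N *m W j + H0 *m W i.
Proof.
move=> ltiN; rewrite -(big_mkord xpredT (fun j => markov_seq H0 H (i%:Z - j%:Z) *m W j)).
rewrite (big_cat_nat _ (n := i)) ?(ltnW ltiN) //= [\sum_(i <= _ < N) _]big_ltn //.
rewrite subrr [X in _ + (_ + X)]big_nat_cond [X in _ + (_ + X)]big1 ?addr0; last first.
  move=> j /andP[/andP[ltij _] _].
  have -> : i%:Z - j%:Z = Negz (j - i.+1) by rewrite NegzE; lia.
  by rewrite mul0mx.
congr (_ + _); rewrite big_mkord; apply: eq_bigr => j _.
by have -> : i%:Z - j%:Z = Posz (i.-1 - j).+1 by have := ltn_ord j; lia.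
Qed.

Lemma mul_markov_block n p q (A : 'M[R]_n) (B : 'M[R]_(n, p)) (C : 'M[R]_(q, n))
    (D : 'M[R]_(q, p)) (W : nat -> 'cV[R]_p) o s N :
  (o + s <= N)%N ->
  \mxblock_(l < s, j < N) markov_seq D (fun t => C *m A ^+ t *m B) (o%:Z + l%:Z - j%:Z)
    *m \mxcol_(j < N) W j =
  \mxcol_(l < s) (C *m state_traj A B 0 W (o + l) + D *m W (o + l)%N).
Proof.
move=> le_osN; rewrite mul_mxblock_mxrow; apply: eq_mxcol => l.
rewrite -PoszD sum_markov_seq; last by have := ltn_ord l; lia.
by rewrite state_traj0E mulmx_sumr; congr (_ + _); apply: eq_bigr => j _; rewrite !mulmxA.
Qed.

End MarkovParameters.

(* The open-loop map (x(k+1), u_s(k)) |-> (u_s(k), y_s(k)). *)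
Definition io_mx (R : pzRingType) n p m (A : 'M[R]_n) (B : 'M[R]_(n, p))
    (C : 'M[R]_(m, n)) (D : 'M[R]_(m, p)) (s : nat)
  : 'M[R]_(\sum_(l < s) p + \sum_(l < s) m, n + \sum_(l < s) p) :=
  block_mx 0 1%:M (\mxcol_(l < s) (C *m A ^+ l))
    (\mxblock_(l < s, j < s) markov_seq D (fun t => C *m A ^+ t *m B) (l%:Z - j%:Z)).

Lemma mul_io_mx (R : pzRingType) n p m (A : 'M[R]_n) (B : 'M[R]_(n, p))
    (C : 'M[R]_(m, n)) (D : 'M[R]_(m, p)) s x0 (U : nat -> 'cV[R]_p) :
  io_mx A B C D s *m col_mx x0 (\mxcol_(j < s) U j) =
  col_mx (\mxcol_(l < s) U l)
         (\mxcol_(l < s) (C *m state_traj A B x0 U l + D *m U l)).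
Proof.
rewrite mul_block_col mul0mx add0r mul1mx mxcol_mul.
rewrite (mul_markov_block _ _ _ _ _ (o := 0)) // -mxcolD.
congr col_mx; apply: eq_mxcol => l.
by rewrite (state_trajD _ _ x0) mulmxDr !mulmxA addrA.
Qed.

Section ColumnSpaces.
Variable R : fieldType.

Lemma row_free_trP r k (G : 'M[R]_(r, k)) :
  reflect (forall z : 'cV_k, G *m z = 0 -> z = 0) (row_free G^T).
Proof.
apply: (iffP idP) => [freeG z Gz0 | injG].
  apply: trmx_inj; apply: (row_free_inj freeG).
  by rewrite -trmx_mul Gz0 !trmx0 mul0mx.
apply/inj_row_free => v vG0; apply: trmx_inj; rewrite trmx0; apply: injG.
by rewrite -(trmxK (G *m v^T)) trmx_mul trmxK vG0 trmx0.
Qed.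

Lemma col_image_sub r c c' (M : 'M[R]_(r, c)) (G : 'M[R]_(r, c')) :
  (forall v : 'cV_c, exists z : 'cV_c', M *m v = G *m z) -> (M^T <= G^T)%MS.
Proof.
move=> subMG; apply/row_subP => i; have [z Mz] := subMG (delta_mx i 0).
by rewrite -tr_col colE Mz trmx_mul submxMl.
Qed.

Lemma eq_col_image_rank r c c' (M : 'M[R]_(r, c)) (G : 'M[R]_(r, c')) :
  (forall v : 'cV_c, exists z : 'cV_c', M *m v = G *m z) ->
  (forall z : 'cV_c', exists v : 'cV_c, G *m z = M *m v) -> \rank M = \rank G.
Proof.
move=> subMG subGM; rewrite -mxrank_tr -[\rank G]mxrank_tr.
by apply/eqP; rewrite eqn_leq !mxrankS ?col_image_sub.
Qed.

End ColumnSpaces.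

Section Realization.
Variables (R : realType) (n p m : nat).
Variables (A : 'M[R]_n) (B : 'M[R]_(n, p)) (C : 'M[R]_(m, n)) (D : 'M[R]_(m, p)).

Lemma controllable_reach : controllable A B ->
  forall x1, exists U : nat -> 'cV[R]_p, state_traj A B 0 U n = x1.
Proof.
move=> ctrlAB x1.
have /row_freeP[Q QK] : row_free (\mxrow_(j < n) (A ^+ j *m B)) by apply/eqP.
have [Z defZ] := mxcol_seqP (Q *m x1).
exists (fun i => Z (n.-1 - i)%N).
rewrite -[RHS]mul1mx -QK -mulmxA defZ mul_mxrow_mxcol state_traj0E.
rewrite (reindex_inj rev_ord_inj); apply: eq_bigr => j _ /=.
by have -> : (n.-1 - (n - j.+1) = j)%N by have := ltn_ord j; lia.
Qed.

Lemma solution_io_mx (u : int -> 'cV[R]_p) x y k s :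
  solves_on A B C D u x y k s ->
  col_mx (stack u k s) (stack y k s) =
  io_mx A B C D s *m col_mx (x (k + 1)) (\mxcol_(l < s) u (k + (l.+1)%:Z)).
Proof.
move=> [solx soly].
have x_traj l : (l < s)%N ->
    x (k + (l.+1)%:Z) = state_traj A B (x (k + 1)) (fun j => u (k + (j.+1)%:Z)) l.
  elim: l => [|l IH] lt_ls //=.
  by rewrite -IH ?(ltnW lt_ls) // -solx; [congr x; lia | lia | lia].
rewrite (mul_io_mx _ _ _ _ _ _ (fun j => u (k + (j.+1)%:Z))).
congr col_mx; apply: eq_mxcol => l.
by rewrite soly -?x_traj //; have := ltn_ord l; lia.
Qed.

Lemma rank_io_mx s : observable A C -> (n <= s)%N ->
  \rank (io_mx A B C D s) = (n + \sum_(l < s) p)%N.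
Proof.
move=> obsAC le_ns; rewrite -mxrank_tr; apply/eqP/row_free_trP => z.
have [x0 [U ->]] := col_mx_mxcol_seqP z.
rewrite mul_io_mx => /eqP; rewrite col_mx_eq0 => /andP[/eqP U0 /eqP Y0].
have U_0 l : (l < s)%N -> U l = 0.
  move=> lt_ls; have := congr1 (fun M => submxcol M (Ordinal lt_ls)) U0.
  by rewrite mxcolK submxcol0.
suff -> : x0 = 0 by rewrite U0 col_mx0.
have /row_free_trP : row_free (\mxcol_(i < n) (C *m A ^+ i))^T.
  by rewrite /row_free mxrank_tr obsAC.
apply; rewrite mxcol_mul -(mxcol0 (p_ := fun=> m)); apply: eq_mxcol => i.
have lt_is : (i < s)%N by have := ltn_ord i; lia.
have := congr1 (fun M => submxcol M (Ordinal lt_is)) Y0.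
rewrite mxcolK submxcol0 /= U_0 // mulmx0 addr0 state_trajD state_traj0E.
rewrite big1 ?addr0 ?mulmxA // => j _.
by rewrite U_0 ?mulmx0 //; have := ltn_ord j; lia.
Qed.

Variable F : 'M[R]_(p, n).

Lemma state_traj_feedback x0 (U : nat -> 'cV[R]_p) l :
  state_traj (AF A B F) B x0 (fun i => U i - F *m state_traj A B x0 U i) l =
  state_traj A B x0 U l.
Proof.
elim: l => [|l /= ->] //.
by rewrite /AF mulmxDl mulmxBr !mulmxA addrA addrAC addrK.
Qed.

Lemma state_traj_closed_loop x0 (W : nat -> 'cV[R]_p) l :
  state_traj A B x0 (fun i => F *m state_traj (AF A B F) B x0 W i + W i) l =
  state_traj (AF A B F) B x0 W l.
Proof.
elim: l => [|l /= ->] //.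
by rewrite /AF mulmxDl mulmxDr !mulmxA addrA.
Qed.

Lemma mul_IG_mxcol s (W : nat -> 'cV[R]_p) (X := state_traj (AF A B F) B 0 W) :
  IG A B C D F s *m \mxcol_(j < s + n) W j =
  col_mx (\mxcol_(l < s) (F *m X (n + l)%N + W (n + l)%N))
         (\mxcol_(l < s) (CF C D F *m X (n + l)%N + D *m W (n + l)%N)).
Proof.
have MsE : Ms A B F s = \mxblock_(l < s, j < s + n)
    markov_seq 1%:M (fun t => F *m AF A B F ^+ t *m B) (n%:Z + l%:Z - j%:Z).
  by apply: eq_mxblock => l j; case: (_ - _) => [[|t]|t].
have NsE : Ns A B C D F s = \mxblock_(l < s, j < s + n)
    markov_seq D (fun t => CF C D F *m AF A B F ^+ t *m B) (n%:Z + l%:Z - j%:Z).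
  by apply: eq_mxblock => l j; case: (_ - _) => [[|t]|t].
rewrite mul_col_mx MsE NsE !mul_markov_block ?(addnC n) //.
by congr col_mx; apply: eq_mxcol => l; rewrite mul1mx.
Qed.

Lemma io_mx_sub_IG : controllable A B ->
  forall s (z : 'cV_(n + \sum_(l < s) p)),
  exists v : 'cV_(\sum_(j < s + n) p), io_mx A B C D s *m z = IG A B C D F s *m v.
Proof.
move=> ctrlAB s z; have [x0 [U ->]] := col_mx_mxcol_seqP z.
have [U0 reach] := controllable_reach ctrlAB x0.
pose Ua i := if (i < n)%N then U0 i else U (i - n)%N.
pose Xa := state_traj A B 0 Ua.
have Ua_shift i : Ua (n + i)%N = U i by rewrite /Ua ltnNge leq_addr addKn.
have Xa_shift l : Xa (n + l)%N = state_traj A B x0 U l.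
  rewrite /Xa state_traj_cat (@eq_state_traj _ _ _ A B 0 Ua U0 n) => [|i ltin]; last first.
    by rewrite /Ua ltin.
  by rewrite reach; apply: eq_state_traj => i _.
exists (\mxcol_(j < s + n) (Ua j - F *m Xa j)).
rewrite mul_io_mx (mul_IG_mxcol _ (fun j => Ua j - F *m Xa j)).
congr col_mx; apply: eq_mxcol => l; rewrite state_traj_feedback -/Xa Xa_shift Ua_shift.
  by rewrite addrC subrK.
by rewrite /CF mulmxDl mulmxBr mulmxA addrA addrAC addrK.
Qed.

Lemma IG_sub_io_mx s (v : 'cV_(\sum_(j < s + n) p)) :
  exists z : 'cV_(n + \sum_(l < s) p), IG A B C D F s *m v = io_mx A B C D s *m z.
Proof.
have [W ->] := mxcol_seqP v.
pose Xc := state_traj (AF A B F) B 0 W.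
pose Uc i := F *m Xc i + W i.
have Xc_shift l : Xc (n + l)%N = state_traj A B (Xc n) (fun i => Uc (n + i)%N) l.
  by rewrite /Xc -!(state_traj_closed_loop 0 W) state_traj_cat.
exists (col_mx (Xc n) (\mxcol_(l < s) Uc (n + l)%N)).
rewrite mul_IG_mxcol (mul_io_mx _ _ _ _ _ _ (fun l => Uc (n + l)%N)) -/Xc.
congr col_mx; apply: eq_mxcol => l //.
by rewrite -Xc_shift /Uc /CF mulmxDl mulmxDr mulmxA addrA.
Qed.

End Realization.

Unset Implicit Arguments.

Theorem theorem1 (R : realType) (n p m : nat)
  (A : 'M[R]_n) (B : 'M[R]_(n, p)) (C : 'M[R]_(m, n)) (D : 'M[R]_(m, p))
  (Hn : (1 <= n)%N) (Hctrb : controllable A B) (Hobs : observable A C)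
  (F : 'M[R]_(p, n)) (s : nat) (Hs : (1 <= s)%N) :
  (forall (k : int) (u : int -> 'cV[R]_p) (x : int -> 'cV[R]_n)
          (y : int -> 'cV[R]_m),
     solves_on A B C D u x y k s ->
     exists v : 'cV[R]_(\sum_(j < s + n) p),
       col_mx (stack u k s) (stack y k s) = IG A B C D F s *m v) /\
  ((n <= s)%N -> \rank (IG A B C D F s) = (s * p + n)%N).
Proof.
split=> [k u x y /solution_io_mx -> | le_ns]; first exact: io_mx_sub_IG.
rewrite (eq_col_image_rank (@IG_sub_io_mx _ _ _ _ A B C D F s)
                           (@io_mx_sub_IG _ _ _ _ A B C D F Hctrb s)).
by rewrite rank_io_mx // sum_nat_const card_ord addnC.
Qed.
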